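(* Let $F$ be a distribution function on $\mathbb{R}$ with tail $\overline{F}=1-F$ and let $h(\cdot)$ be a positive function. Then: $F\in \mathrm{GMDA}(h)$ and $h(x)\to\infty$ as $x\to\infty$ if and only if $F\in \mathrm{GMDA}(h)\cap\mathcal{L}$. Moreover, either of these equivalent conditions implies that $h^{p}(\cdot)\in\mathcal{H}^{\ast}_F$ for every $p\in(0,1)$.
   Context: A distribution function $F$ with upper endpoint $x_F=\sup\{x:F(x)<1\}$ belongs to the Gumbel max-domain of attraction with scaling function $h>0$, written $F\in\mathrm{GMDA}(h)$, if $\lim_{x\to x_F}\overline{F}(x+yh(x))/\overline{F}(x)=e^{-y}$ for all $y\in\mathbb{R}$. $F$ is long-tailed, $F\in\mathcal{L}$, if $\overline{F}(x)>0$ for all $x\ge 0$ and $\overline{F}(x+y)/\overline{F}(x)\to1$ as $x\to\infty$ for every $y\in\mathbb{R}$. For $F\in\mathcal{L}$, $\mathcal{H}_F$ is the set of eventually positive functions $h$ such that (i) $h(x)/x\to0$; (ii) $\overline{F}(x+yh(x))/\overline{F}(x)\to1$ as $x\to\infty$ for every $y\in\mathbb{R}$; (iii) $h$ is weakly self-neglecting, i.e. $\limsup_{x\to\infty}h(x+yh(x))/h(x)<\infty$ for every $y\in\mathbb{R}$. $\mathcal{H}^\ast_F=\{h\in\mathcal{H}_F: h(x)\to\infty\}$. *)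

From Stdlib Require Import Reals.
From Coquelicot Require Import Coquelicot.
Open Scope R_scope.

Definition is_distribution_function (F : R -> R) : Prop :=
  (forall x y, x <= y -> F x <= F y) /\
  (forall x, filterlim F (at_right x) (locally (F x))) /\
  filterlim F (Rbar_locally m_infty) (locally 0) /\
  filterlim F (Rbar_locally p_infty) (locally 1).

Definition Fbar (F : R -> R) (x : R) : R := 1 - F x.

Definition upper_endpoint (F : R -> R) : Rbar := Lub_Rbar (fun x => F x < 1).

Definition to_endpoint (a : Rbar) : (R -> Prop) -> Prop :=
  match a with
  | Finite r => at_left r
  | p_infty => Rbar_locally p_infty
  | m_infty => Rbar_locally m_infty
  end.

Definition GMDA (F h : R -> R) : Prop :=
  forall y : R,
    filterlim (fun x => Fbar F (x + y * h x) / Fbar F x)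
      (to_endpoint (upper_endpoint F)) (locally (exp (- y))).

Definition long_tailed (F : R -> R) : Prop :=
  (forall x, 0 <= x -> 0 < Fbar F x) /\
  (forall y : R,
    filterlim (fun x => Fbar F (x + y) / Fbar F x)
      (Rbar_locally p_infty) (locally 1)).

(* The class H_F. Condition (iii), limsup < oo, is written as
   "eventually bounded above". *)
Definition H_class (F : R -> R) (g : R -> R) : Prop :=
  Rbar_locally p_infty (fun x => 0 < g x) /\
  filterlim (fun x => g x / x) (Rbar_locally p_infty) (locally 0) /\
  (forall y : R,
    filterlim (fun x => Fbar F (x + y * g x) / Fbar F x)
      (Rbar_locally p_infty) (locally 1)) /\
  (forall y : R, exists M : R,
    Rbar_locally p_infty (fun x => g (x + y * g x) / g x <= M)).

Definition H_star_class (F : R -> R) (g : R -> R) : Prop :=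
  H_class F g /\ filterlim g (Rbar_locally p_infty) (Rbar_locally p_infty).

From Stdlib Require Import Reals Lra.
From Coquelicot Require Import Coquelicot.
Open Scope R_scope.

(* If [h] tends to infinity and [x_F] were finite, [x + h(x)] would overshoot [x_F] and the
   GMDA ratio would vanish; so [x_F = +oo] and the tail is positive everywhere. A shift
   [u(x) = o(h(x))] then leaves the tail asymptotically unchanged, being squeezed between the
   shifts [+- d h(x)], whose ratios tend to [exp (-+ d)]: constant shifts give a long tail, and
   [y h(x)^p = o(h(x))] gives condition (ii) of [H_F]. Conversely a long tail forces [h] to
   infinity, since [h(x) <= K] would give [Fbar(x + h(x))/Fbar(x) >= Fbar(x + K)/Fbar(x) -> 1],
   not [exp (-1)]. Finally [h(x) < x] eventually (otherwise [Fbar(x - h(x))/Fbar(x) >=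
   Fbar(0)/Fbar(x) -> +oo]), so [h^p = o(x)]; and comparing tail ratios at [x] and at
   [z = x + y h(x)^p] shows [h(z) < 2 h(x)], which bounds [h^p(z)/h^p(x)]. *)

Lemma filterlim_locally_Rabs {T} (G : (T -> Prop) -> Prop) {FG : Filter G}
  (f : T -> R) (l : R) :
  filterlim f G (locally l) <-> forall eps, 0 < eps -> G (fun x => Rabs (f x - l) < eps).
Proof.
  rewrite filterlim_locally. split.
  - intros H eps Heps. exact (H (mkposreal eps Heps)).
  - intros H eps. exact (H eps (cond_pos eps)).
Qed.

Lemma filterlim_p_infty_iff {T} (G : (T -> Prop) -> Prop) {FG : Filter G} (f : T -> R) :
  filterlim f G (Rbar_locally p_infty) <-> forall K, G (fun x => K < f x).
Proof.
  split.
  - intros H K. apply (H (fun y => K < y)). exists K; auto.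
  - intros H P [K HK]. apply (filter_imp (fun x => K < f x) (fun x => P (f x))); auto.
Qed.

Lemma eventually_gt (M : R) : Rbar_locally p_infty (fun x => M < x).
Proof. exists M; auto. Qed.

Lemma ratio_bounds a b l eps :
  0 < a -> Rabs (b / a - l) < eps -> (l - eps) * a < b < (l + eps) * a.
Proof.
  intros Ha H. apply Rabs_def2 in H.
  replace b with (b / a * a) by (field; lra).
  split; apply Rmult_lt_compat_r; lra.
Qed.

Lemma is_domin_bound {T} (G : (T -> Prop) -> Prop) {FG : Filter G} (g u : T -> R) :
  G (fun x => 0 < g x) -> is_domin G g u ->
  forall d, 0 < d -> G (fun x => Rabs (u x) <= d * g x).
Proof.
  intros Hg Hu d Hd. generalize (filter_and _ _ Hg (Hu (mkposreal d Hd))). apply filter_imp.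
  intros x [Hgx Hx]. change (Rabs (u x) <= d * Rabs (g x)) in Hx.
  now rewrite (Rabs_pos_eq (g x)) in Hx by lra.
Qed.

Lemma is_domin_const {T} (G : (T -> Prop) -> Prop) {FG : Filter G} (g : T -> R) (c : R) :
  filterlim g G (Rbar_locally p_infty) -> is_domin G g (fun _ => c).
Proof.
  intros Hg eps. apply (filter_imp (fun x => Rabs c / eps < g x)).
  - intros x Hx. change (Rabs c <= eps * Rabs (g x)).
    assert (Hc : 0 <= Rabs c / eps)
      by (apply Rdiv_le_0_compat; [apply Rabs_pos | apply cond_pos]).
    rewrite (Rabs_pos_eq (g x)) by lra.
    apply Rlt_div_l in Hx; [rewrite Rmult_comm; now left | apply cond_pos].
  - exact (proj1 (filterlim_p_infty_iff G g) Hg _).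
Qed.

Lemma Rpower_negligible_id p : p < 1 ->
  is_domin (Rbar_locally p_infty) (fun a => a) (fun a => Rpower a p).
Proof.
  intros Hp eps. exists (exp (ln eps / (p - 1))). intros a Ha.
  assert (Hapos : 0 < a) by (generalize (exp_pos (ln eps / (p - 1))); lra).
  apply ln_increasing in Ha; [|apply exp_pos]. rewrite ln_exp in Ha.
  assert (Hlt : (p - 1) * ln a < ln eps).
  { apply Rmult_lt_compat_l with (r := 1 - p) in Ha; [|lra].
    replace ((1 - p) * (ln eps / (p - 1))) with (- ln eps) in Ha by (field; lra). lra. }
  change (Rabs (Rpower a p) <= eps * Rabs a).
  rewrite (Rabs_pos_eq a), Rabs_pos_eq by (try unfold Rpower; left; auto using exp_pos).
  unfold Rpower. replace (p * ln a) with ((p - 1) * ln a + ln a) by ring.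
  rewrite exp_plus, exp_ln by exact Hapos.
  left. apply Rmult_lt_compat_r; [exact Hapos|].
  rewrite <- (exp_ln eps) by apply cond_pos. now apply exp_increasing.
Qed.

Lemma Rpower_tends_to_infinity p : 0 < p ->
  filterlim (fun a => Rpower a p) (Rbar_locally p_infty) (Rbar_locally p_infty).
Proof.
  intros Hp. apply (filterlim_p_infty_iff (Rbar_locally p_infty)). intros K.
  set (K' := Rmax K 1).
  assert (HK : K <= K') by apply Rmax_l. assert (HK1 : 1 <= K') by apply Rmax_r.
  exists (exp (ln K' / p)). intros a Ha.
  apply ln_increasing in Ha; [|apply exp_pos]. rewrite ln_exp in Ha.
  apply Rmult_lt_compat_l with (r := p) in Ha; [|exact Hp].
  replace (p * (ln K' / p)) with (ln K') in Ha by (field; lra).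
  apply exp_increasing in Ha. rewrite exp_ln in Ha by lra. unfold Rpower. lra.
Qed.

Lemma Fbar_nonpos_beyond_upper_endpoint F r :
  upper_endpoint F = Finite r -> forall w, r < w -> Fbar F w <= 0.
Proof.
  intros E w Hw. unfold Fbar. destruct (Rle_dec 1 (F w)) as [|Hlt]; [lra|].
  destruct (Lub_Rbar_correct (fun x => F x < 1)) as [Hub _].
  specialize (Hub w ltac:(lra)). unfold upper_endpoint in E. rewrite E in Hub. simpl in Hub. lra.
Qed.

Lemma upper_endpoint_p_infty F :
  (forall x, 0 <= x -> F x < 1) -> upper_endpoint F = p_infty.
Proof.
  intros H. destruct (Lub_Rbar_correct (fun x => F x < 1)) as [Hub _].
  unfold upper_endpoint. destruct (Lub_Rbar (fun x => F x < 1)) as [r| |].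
  - set (w := Rmax 0 (r + 1)).
    assert (Hw : r + 1 <= w) by apply Rmax_r.
    specialize (Hub w (H w (Rmax_l 0 (r + 1)))). simpl in Hub. lra.
  - reflexivity.
  - destruct (Hub 0 (H 0 (Rle_refl 0))).
Qed.

Lemma upper_endpoint_long_tailed F : long_tailed F -> upper_endpoint F = p_infty.
Proof.
  intros [Hpos _]. apply upper_endpoint_p_infty. intros x Hx.
  specialize (Hpos x Hx). unfold Fbar in Hpos. lra.
Qed.

Section DistributionTail.

Variable F : R -> R.
Hypothesis HF : is_distribution_function F.

Lemma Fbar_antitone x y : x <= y -> Fbar F y <= Fbar F x.
Proof. intros Hxy. destruct HF as [Hmon _]. unfold Fbar. specialize (Hmon x y Hxy). lra. Qed.

Lemma Fbar_vanishes : filterlim (Fbar F) (Rbar_locally p_infty) (locally 0).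
Proof.
  destruct HF as [_ [_ [_ H1]]].
  apply (filterlim_locally_Rabs (Rbar_locally p_infty)). intros eps Heps.
  generalize (proj1 (filterlim_locally_Rabs _ _ _) H1 eps Heps). apply filter_imp.
  intros x Hx. unfold Fbar. rewrite <- Rabs_Ropp.
  now replace (- (1 - F x - 0)) with (F x - 1) by ring.
Qed.

Lemma Fbar_nonneg x : 0 <= Fbar F x.
Proof.
  destruct (Rle_dec 0 (Fbar F x)) as [|Hneg]; [assumption|exfalso].
  assert (Hsmall := proj1 (filterlim_locally_Rabs _ _ _) Fbar_vanishes (- Fbar F x)
    ltac:(lra)).
  destruct (filter_ex (F := Rbar_locally p_infty) _ (filter_and _ _ (eventually_gt x) Hsmall))
    as [y [Hy Hsy]].
  apply Rabs_def2 in Hsy. generalize (Fbar_antitone x y ltac:(lra)). lra.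
Qed.

Lemma upper_endpoint_not_m_infty : upper_endpoint F <> m_infty.
Proof.
  destruct HF as [_ [_ [H0 _]]]. intros E.
  destruct (proj1 (filterlim_locally_Rabs (Rbar_locally m_infty) _ _) H0 1 Rlt_0_1) as [M HM].
  destruct (Lub_Rbar_correct (fun x => F x < 1)) as [Hub _].
  specialize (HM (M - 1) ltac:(lra)). apply Rabs_def2 in HM.
  specialize (Hub (M - 1) ltac:(lra)). unfold upper_endpoint in E. rewrite E in Hub. exact Hub.
Qed.

Lemma Fbar_pos_of_upper_endpoint : upper_endpoint F = p_infty -> forall x, 0 < Fbar F x.
Proof.
  intros E x. unfold Fbar. destruct (Rlt_dec (F x) 1) as [|Hge]; [lra|exfalso].
  destruct (Lub_Rbar_correct (fun x => F x < 1)) as [_ Hlub].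
  specialize (Hlub (Finite x)). unfold upper_endpoint in E. rewrite E in Hlub. apply Hlub.
  intros z Hz. simpl. destruct (Rle_dec z x) as [|Hzx]; [assumption|].
  destruct HF as [Hmon _]. generalize (Hmon x z ltac:(lra)). lra.
Qed.

Lemma tail_ratio_one_shift_to_infinity (u : R -> R) : (forall x, 0 < Fbar F x) ->
  filterlim (fun x => Fbar F (x + u x) / Fbar F x) (Rbar_locally p_infty) (locally 1) ->
  filterlim (fun x => x + u x) (Rbar_locally p_infty) (Rbar_locally p_infty).
Proof.
  intros Hpos Hu. apply (filterlim_p_infty_iff (Rbar_locally p_infty)). intros N.
  assert (HN := Hpos N).
  assert (Hratio := proj1 (filterlim_locally_Rabs _ _ _) Hu 1 Rlt_0_1).
  assert (Hsmall := proj1 (filterlim_locally_Rabs _ _ _) Fbar_vanishes (Fbar F N / 2)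
    ltac:(lra)).
  generalize (filter_and _ _ Hratio Hsmall). apply filter_imp.
  intros x [Hrx Hsx].
  destruct (ratio_bounds _ _ _ _ (Hpos x) Hrx) as [_ Hup].
  apply Rabs_def2 in Hsx.
  destruct (Rlt_dec N (x + u x)) as [|Hle]; [assumption|exfalso].
  generalize (Fbar_antitone (x + u x) N ltac:(lra)). lra.
Qed.

End DistributionTail.

Lemma upper_endpoint_GMDA_scale_unbounded F h : is_distribution_function F -> GMDA F h ->
  filterlim h (to_endpoint (upper_endpoint F)) (Rbar_locally p_infty) ->
  upper_endpoint F = p_infty.
Proof.
  intros HF HG Hh. specialize (HG 1).
  destruct (upper_endpoint F) as [r| |] eqn:E;
    [exfalso | reflexivity | destruct (upper_endpoint_not_m_infty F HF E)].
  simpl in HG, Hh.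
  assert (He := exp_pos (- (1))).
  assert (Hratio := proj1 (filterlim_locally_Rabs _ _ _) HG _ He).
  assert (Hbig := proj1 (filterlim_p_infty_iff _ h) Hh 1).
  assert (Hnear : at_left r (fun x => r - 1 < x)).
  { exists (mkposreal 1 Rlt_0_1). intros x Hx _.
    change (Rabs (x - r) < 1) in Hx. apply Rabs_def2 in Hx. lra. }
  destruct (filter_ex (F := at_left r) _ (filter_and _ _ Hratio (filter_and _ _ Hbig Hnear)))
    as [x [Hrx [Hhx Hx]]].
  assert (Hzero : Fbar F (x + 1 * h x) = 0).
  { apply Rle_antisym; [|apply (Fbar_nonneg F HF)].
    apply (Fbar_nonpos_beyond_upper_endpoint F r E). lra. }
  rewrite Hzero, Rdiv_0_l, Rminus_0_l, Rabs_Ropp, Rabs_pos_eq in Hrx; lra.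
Qed.

Lemma GMDA_at_p_infty F h : GMDA F h -> upper_endpoint F = p_infty ->
  forall y, filterlim (fun x => Fbar F (x + y * h x) / Fbar F x)
    (Rbar_locally p_infty) (locally (exp (- y))).
Proof. intros HG E y. specialize (HG y). rewrite E in HG. exact HG. Qed.

Section GumbelScaling.

Variables F h : R -> R.
Hypothesis HF : is_distribution_function F.
Hypothesis Fbar_pos : forall x, 0 < Fbar F x.
Hypothesis h_pos : forall x, 0 < h x.
Hypothesis HG : forall y, filterlim (fun x => Fbar F (x + y * h x) / Fbar F x)
  (Rbar_locally p_infty) (locally (exp (- y))).

Let GMDA_close y eps : 0 < eps ->
  Rbar_locally p_infty (fun x => Rabs (Fbar F (x + y * h x) / Fbar F x - exp (- y)) < eps).
Proof. exact (proj1 (filterlim_locally_Rabs _ _ _) (HG y) eps). Qed.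

Lemma GMDA_shift_negligible (u : R -> R) : is_domin (Rbar_locally p_infty) h u ->
  filterlim (fun x => Fbar F (x + u x) / Fbar F x) (Rbar_locally p_infty) (locally 1).
Proof.
  intros Hu. apply (filterlim_locally_Rabs (Rbar_locally p_infty)). intros eps Heps.
  destruct (proj1 (filterlim_locally _ _) (continuous_exp 0) (mkposreal (eps / 2) ltac:(lra)))
    as [d Hd].
  assert (Hexp : forall t, Rabs t < d -> Rabs (exp t - 1) < eps / 2).
  { intros t Ht. rewrite <- exp_0. apply (Hd t).
    change (Rabs (t - 0) < d). now rewrite Rminus_0_r. }
  set (d2 := d / 2). assert (Hd2 : 0 < d2) by (unfold d2; generalize (cond_pos d); lra).
  assert (Hd2d : Rabs d2 < d) by (rewrite Rabs_pos_eq; unfold d2 in *; lra).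
  assert (Hlo := Hexp (- d2) ltac:(now rewrite Rabs_Ropp)).
  assert (Hhi := Hexp d2 Hd2d).
  assert (Hd2h := is_domin_bound _ h u (filter_forall _ h_pos) Hu d2 Hd2).
  assert (Hplus := GMDA_close d2 (eps / 2) ltac:(lra)).
  assert (Hminus := GMDA_close (- d2) (eps / 2) ltac:(lra)).
  generalize (filter_and _ _ Hd2h (filter_and _ _ Hplus Hminus)). apply filter_imp.
  intros x [Hux [Hp Hm]]. rewrite Ropp_involutive in Hm.
  assert (Hupper : Fbar F (x + d2 * h x) <= Fbar F (x + u x)).
  { apply (Fbar_antitone F HF). generalize (Rle_abs (u x)). lra. }
  assert (Hlower : Fbar F (x + u x) <= Fbar F (x + - d2 * h x)).
  { apply (Fbar_antitone F HF). generalize (Rle_abs (- u x)). rewrite Rabs_Ropp. lra. }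
  assert (Hinv : 0 < / Fbar F x) by apply Rinv_0_lt_compat, Fbar_pos.
  unfold Rdiv in *.
  apply Rmult_le_compat_r with (r := / Fbar F x) in Hupper; [|lra].
  apply Rmult_le_compat_r with (r := / Fbar F x) in Hlower; [|lra].
  apply Rabs_def2 in Hlo, Hhi, Hp, Hm. apply Rabs_def1; lra.
Qed.

Lemma GMDA_scale_lt_id : Rbar_locally p_infty (fun x => h x < x).
Proof.
  assert (HE : 0 < exp 1 + 1) by (generalize (exp_pos 1); lra).
  assert (H0 := Fbar_pos 0).
  assert (Hratio := GMDA_close (- (1)) 1 Rlt_0_1). rewrite Ropp_involutive in Hratio.
  assert (Hsmall := proj1 (filterlim_locally_Rabs _ _ _) (Fbar_vanishes F HF)
    (Fbar F 0 / (exp 1 + 1)) ltac:(now apply Rdiv_lt_0_compat)).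
  generalize (filter_and _ _ Hratio Hsmall). apply filter_imp. intros x [Hrx Hsx].
  destruct (ratio_bounds _ _ _ _ (Fbar_pos x) Hrx) as [_ Hup].
  rewrite Rminus_0_r, Rabs_pos_eq in Hsx by apply Rlt_le, Fbar_pos.
  apply Rlt_div_r in Hsx; [|lra].
  destruct (Rlt_dec (h x) x) as [|Hge]; [assumption|exfalso].
  generalize (Fbar_antitone F HF (x + - (1) * h x) 0 ltac:(lra)). nra.
Qed.

Lemma GMDA_scale_unbounded_of_long_tailed : long_tailed F ->
  filterlim h (Rbar_locally p_infty) (Rbar_locally p_infty).
Proof.
  intros [_ HL]. apply (filterlim_p_infty_iff (Rbar_locally p_infty)). intros K.
  assert (He : exp (- (1)) < 1 / 2).
  { rewrite exp_Ropp. generalize (exp_ineq1 1 ltac:(lra)). intros H2.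
    apply Rinv_lt_contravar in H2; lra. }
  assert (Hshift := proj1 (filterlim_locally_Rabs _ _ _) (HL K) (1 / 4) ltac:(lra)).
  assert (Hratio := GMDA_close 1 (1 / 4) ltac:(lra)).
  generalize (filter_and _ _ Hshift Hratio). apply filter_imp. intros x [Hsx Hrx].
  destruct (ratio_bounds _ _ _ _ (Fbar_pos x) Hsx) as [Hlo _].
  destruct (ratio_bounds _ _ _ _ (Fbar_pos x) Hrx) as [_ Hup].
  destruct (Rlt_dec K (h x)) as [|Hle]; [assumption|exfalso].
  generalize (Fbar_antitone F HF (x + 1 * h x) (x + K) ltac:(lra)), (Fbar_pos x). nra.
Qed.

Lemma long_tailed_of_GMDA_scale_unbounded :
  filterlim h (Rbar_locally p_infty) (Rbar_locally p_infty) -> long_tailed F.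
Proof.
  intros Hh. split.
  - intros x _. apply Fbar_pos.
  - intros y. apply (GMDA_shift_negligible (fun _ => y)). exact (is_domin_const _ h y Hh).
Qed.

(* If [h(z)] were [>= c h(x)] at [z = x + u(x)], then [z + h(z) >= x + y h(x)] for some
   [1 < y < c], and the tail ratios [exp (-1)] (at [z], transported by [Fbar z ~ Fbar x]) and
   [exp (-y)] would be in the wrong order. *)
Lemma GMDA_shift_scale_bounded (u : R -> R) c :
  is_domin (Rbar_locally p_infty) h u -> 1 < c ->
  Rbar_locally p_infty (fun x => h (x + u x) < c * h x).
Proof.
  intros Hu Hc.
  set (y := (1 + c) / 2).
  assert (Hy : exp (- y) < exp (- (1))) by (apply exp_increasing; unfold y; lra).
  assert (He1 : exp (- (1)) < 1) by (rewrite <- exp_0 at 2; apply exp_increasing; lra).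
  assert (He0 := exp_pos (- y)).
  set (eps := (exp (- (1)) - exp (- y)) / 4).
  assert (Heps : 0 < eps) by (unfold eps; lra).
  assert (Hratio := GMDA_shift_negligible u Hu).
  assert (Hz := tail_ratio_one_shift_to_infinity F HF u Fbar_pos Hratio).
  assert (Hat_z := filterlim_comp _ _ _ _ _ _ _ _ Hz (proj2 (filterlim_locally_Rabs _ _ _)
    (GMDA_close 1))).
  assert (Hhz := proj1 (filterlim_locally_Rabs _ _ _) Hat_z eps Heps).
  assert (Hzx := proj1 (filterlim_locally_Rabs _ _ _) Hratio eps Heps).
  assert (Hyx := GMDA_close y eps Heps).
  assert (Hux := is_domin_bound _ h u (filter_forall _ h_pos) Hu (c - y) ltac:(unfold y; lra)).
  generalize (filter_and _ _ Hhz (filter_and _ _ Hzx (filter_and _ _ Hyx Hux))).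
  apply filter_imp. intros x [H1 [H2 [H3 H4]]]. simpl in H1.
  set (z := x + u x) in *.
  destruct (ratio_bounds _ _ _ _ (Fbar_pos z) H1) as [Hlo1 _].
  destruct (ratio_bounds _ _ _ _ (Fbar_pos x) H2) as [Hlo2 _].
  destruct (ratio_bounds _ _ _ _ (Fbar_pos x) H3) as [_ Hup3].
  destruct (Rlt_dec (h z) (c * h x)) as [|Hge]; [assumption|exfalso].
  assert (Hmono : Fbar F (z + 1 * h z) <= Fbar F (x + y * h x)).
  { apply (Fbar_antitone F HF). generalize (Rle_abs (- u x)). rewrite Rabs_Ropp.
    assert (Hzdef : z = x + u x) by reflexivity. lra. }
  assert (Hchain : (exp (- (1)) - eps) * ((1 - eps) * Fbar F x) < Fbar F (z + 1 * h z)).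
  { apply Rle_lt_trans with ((exp (- (1)) - eps) * Fbar F z); [|exact Hlo1].
    apply Rmult_le_compat_l; [unfold eps; lra | lra]. }
  assert (Hcoef : exp (- y) + eps <= (exp (- (1)) - eps) * (1 - eps)).
  { assert (Hgap : exp (- (1)) = exp (- y) + 4 * eps) by (unfold eps; field). nra. }
  generalize (Rmult_le_compat_r _ _ _ (Rlt_le _ _ (Fbar_pos x)) Hcoef). lra.
Qed.

Lemma GMDA_power_scale_div_id p : 0 < p < 1 ->
  filterlim (fun x => Rpower (h x) p / x) (Rbar_locally p_infty) (locally 0).
Proof.
  intros Hp. apply (filterlim_locally_Rabs (Rbar_locally p_infty)). intros eps Heps.
  assert (Hpow := is_domin_bound _ _ _ (eventually_gt 0) (Rpower_negligible_id p (proj2 Hp))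
    (eps / 2) ltac:(lra)).
  generalize (filter_and _ _ (eventually_gt 0) (filter_and _ _ GMDA_scale_lt_id Hpow)).
  apply filter_imp. intros x [Hx [Hhx Hpx]].
  assert (Hlt : Rpower (h x) p < Rpower x p) by (apply Rlt_Rpower_l; [lra | split; auto]).
  assert (Hpos : 0 < Rpower (h x) p / x) by (apply Rdiv_lt_0_compat; [apply exp_pos | exact Hx]).
  assert (Hle : Rpower (h x) p / x <= eps / 2).
  { apply Rle_div_l; [exact Hx|]. generalize (Rle_abs (Rpower x p)). lra. }
  rewrite Rminus_0_r, Rabs_pos_eq; lra.
Qed.

Lemma GMDA_power_scale_H_star p : 0 < p < 1 ->
  filterlim h (Rbar_locally p_infty) (Rbar_locally p_infty) ->
  H_star_class F (fun x => Rpower (h x) p).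
Proof.
  intros Hp Hh.
  assert (Hnegl : forall y, is_domin (Rbar_locally p_infty) h (fun x => y * Rpower (h x) p)).
  { intros y. exact (domin_scal_r _ _ y
      (domin_comp _ _ _ _ h Hh (Rpower_negligible_id p (proj2 Hp)))). }
  split; [split; [|split; [|split]]|].
  - apply filter_forall. intros x. apply exp_pos.
  - exact (GMDA_power_scale_div_id p Hp).
  - intros y. exact (GMDA_shift_negligible _ (Hnegl y)).
  - intros y. exists (Rpower 2 p).
    generalize (GMDA_shift_scale_bounded _ 2 (Hnegl y) ltac:(lra)). apply filter_imp.
    intros x Hx. apply Rle_div_l; [apply exp_pos|].
    rewrite Rpower_mult_distr by (lra || apply h_pos).
    left. apply Rlt_Rpower_l; [lra | split; [apply h_pos | exact Hx]].
  - exact (filterlim_comp _ _ _ _ _ _ _ _ Hh (Rpower_tends_to_infinity p (proj1 Hp))).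
Qed.

End GumbelScaling.

Theorem lemma2p1 (F h : R -> R)
  (HF : is_distribution_function F)
  (hpos : forall x, 0 < h x) :
  ((GMDA F h /\
    filterlim h (to_endpoint (upper_endpoint F)) (Rbar_locally p_infty))
   <-> (GMDA F h /\ long_tailed F))
  /\
  ((GMDA F h /\ long_tailed F) ->
   forall p : R, 0 < p < 1 ->
     H_star_class F (fun x => Rpower (h x) p)).
Proof.
  split; [split|].
  - intros [HG Hh]. split; [exact HG|].
    assert (E := upper_endpoint_GMDA_scale_unbounded F h HF HG Hh). rewrite E in Hh.
    exact (long_tailed_of_GMDA_scale_unbounded F h HF (Fbar_pos_of_upper_endpoint F HF E) hpos
      (GMDA_at_p_infty F h HG E) Hh).
  - intros [HG HL]. split; [exact HG|].
    assert (E := upper_endpoint_long_tailed F HL). rewrite E.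
    exact (GMDA_scale_unbounded_of_long_tailed F h HF (Fbar_pos_of_upper_endpoint F HF E)
      (GMDA_at_p_infty F h HG E) HL).
  - intros [HG HL] p Hp.
    assert (E := upper_endpoint_long_tailed F HL).
    assert (Hpos := Fbar_pos_of_upper_endpoint F HF E).
    assert (HGinf := GMDA_at_p_infty F h HG E).
    exact (GMDA_power_scale_H_star F h HF Hpos hpos HGinf p Hp
      (GMDA_scale_unbounded_of_long_tailed F h HF Hpos HGinf HL)).
Qed.
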